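(* For the prism $Y_n=C_n\square P_2$ with $n\ge 3$: $IDI(Y_n)=2$ if $n\ge 6$, and $IDI(Y_3)=IDI(Y_4)=IDI(Y_5)=3$.
   Context: $C_n$ is the cycle on $n$ vertices, $P_2$ the path on two vertices, and $\square$ the Cartesian product. For a finite simple connected graph $G=(V,E)$ with diameter $d$, a rank assignment is a function $f:V\to\mathbb{R}$; under $f$, the string of a vertex $v$ is the $d$-vector whose $i$-th coordinate is the sum of $f(w)$ over all vertices $w$ with $d(v,w)=i$. The ID-index $IDI(G)$ is the minimum $k$ such that there exists $f:V\to\mathbb{R}$ with $|f(V)|=k$ under which all vertices have distinct strings. *)

From HB Require Import structures.
From mathcomp Require Import all_boot all_order all_algebra.
From mathcomp Require Import Rstruct.
From Stdlib Require Import Rdefinitions.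
Set Implicit Arguments. Unset Strict Implicit. Unset Printing Implicit Defensive.
Import Order.TTheory GRing.Theory Num.Theory.

Section Graph.
Variables (T : finType) (e : rel T).

Fixpoint ball (k : nat) (x : T) : {set T} :=
  if k is k'.+1 then
    ball k' x :|: [set y | [exists z in ball k' x, e z y]]
  else [set x].

(* graph distance: least k with y in ball k x (for a connected graph, < #|T|) *)
Definition dist (x y : T) : nat :=
  find (fun k => y \in ball k x) (iota 0 #|T|).

Definition diameter : nat := \max_(x : T) \max_(y : T) dist x y.

Local Open Scope ring_scope.
Definition vstring (f : T -> R) (v : T) : seq R :=
  [seq \sum_(w : T | dist v w == i) f w | i <- iota 1 diameter].

Local Close Scope ring_scope.

Definition nvals (f : T -> R) : nat := size (undup [seq f v | v <- enum T]).

Definition ID_assignment (f : T -> R) : Prop := injective (vstring f).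

Definition IDI_is (k : nat) : Prop :=
  (exists f : T -> R, ID_assignment f /\ nvals f = k) /\
  (forall f : T -> R, ID_assignment f -> k <= nvals f).

End Graph.

Definition prism_rel (n : nat) : rel ('I_n * bool) :=
  fun u v =>
    ((u.2 == v.2) && ((val v.1 == (val u.1).+1 %% n) || (val u.1 == (val v.1).+1 %% n)))
    || ((u.1 == v.1) && (u.2 != v.2)).
Arguments prism_rel n : clear implicits.

From mathcomp Require Import all_boot all_order all_algebra.
From mathcomp Require Import Rstruct zify.
From Stdlib Require Import Rdefinitions.
Set Implicit Arguments. Unset Strict Implicit. Unset Printing Implicit Defensive.
Import GRing.Theory Num.Theory.

(* The distance in C_n □ P_2 from (a, s) to (b, t) is the cyclic distance of a and b plus
   [s != t], so the diameter is n/2 + 1 (rounded down).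

   An assignment with at most two values is constant on some set S and on its complement, so
   the string of u is determined by the numbers of vertices of S and of its complement at each
   distance from u. For S empty, (a, 0) and (a, 1) are exchanged by swapping the layers, hence
   IDI >= 2; for n <= 5 an exhaustive search over all S finds two such indistinguishable
   vertices, hence IDI >= 3.

   Conversely, the multiplicity of a vertex in a list l is an assignment whose string at u
   counts the entries of l at each distance from u. For n >= 9 and h = n/2, the indicator of
   the marks (0,0), (1,0), (h-2,0), (h,0) separates all vertices: the string of (x, s) yields
   the multiset of its distances to the marks, and on each of six arcs of the cycle these
   distances are affine in x, which a case analysis inverts. For 3 <= n <= 8, explicit lists
   are checked by computation. *)

Lemma find_leq_iota d s m : s <= d < s + m -> find (fun k => d <= k) (iota s m) = d - s.
Proof.
elim: m s => [|m IHm] s /=; first by lia.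
by move=> bounds; case: ifP => d_s; [lia | rewrite IHm; lia].
Qed.

Lemma sum_count_mem (T : finType) (P : pred T) (l : seq T) :
  \sum_(w | P w) count_mem w l = count P l.
Proof.
elim: l => [|x l IHl] /=; first by rewrite big1.
rewrite big_split /= IHl; congr (_ + _).
have [Px|nPx] := boolP (P x).
  by rewrite (bigD1 x) //= eqxx big1 ?addn0 // => w /andP [_ /negPf]; rewrite eq_sym => ->.
by rewrite big1 // => w Pw; case: eqP => // xw; rewrite xw Pw in nPx.
Qed.

Lemma perm_eq_of_pos_counts (s1 s2 : seq nat) : size s1 = size s2 ->
  (forall i, 0 < i -> count_mem i s1 = count_mem i s2) -> perm_eq s1 s2.
Proof.
move=> eq_size eq_pos.
have pos_parts : perm_eq (filter (leq 1) s1) (filter (leq 1) s2).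
  apply/allP => -[|i] _ /=; rewrite !count_filter.
    by rewrite !(@eq_count _ _ pred0) ?count_pred0 // => -[].
  by rewrite !(@eq_count _ _ (pred1 i.+1)) ?eq_pos // => j; rewrite /= andb_idr // => /eqP ->.
have zeros s : count_mem 0 s = size s - count (leq 1) s.
  rewrite -(count_predC (pred1 0) s) (@eq_count _ (predC (pred1 0)) (leq 1)) ?addnK //.
  by move=> x; rewrite /= lt0n.
apply/allP => -[|i] _ /=; last by rewrite eq_pos.
by rewrite !zeros eq_size -!size_filter (perm_size pos_parts).
Qed.

Section PermMatch.
Variable T : eqType.

Fixpoint picks (s : seq T) : seq (T * seq T) :=
  if s is x :: s' then (x, s') :: [seq (p.1, x :: p.2) | p <- picks s'] else [::].

(* On explicit lists, [perm_match s t] unfolds to the disjunction over all ways of matching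
   the entries of [s] with those of [t], a form that [lia] can case on. *)
Fixpoint perm_match (s t : seq T) : Prop :=
  if s is a :: s' then foldr (fun p P => (a = p.1 /\ perm_match s' p.2) \/ P) False (picks t)
  else True.

Lemma mem_picks a t : a \in t -> exists2 u, (a, u) \in picks t & perm_eq t (a :: u).
Proof.
elim: t => [|b t IHt] //=; rewrite inE; have [<- _|ab /IHt [u au t_au]] := eqVneq a b.
  by exists t; rewrite ?mem_head.
exists (b :: u); first by rewrite inE (map_f (fun p => (p.1, b :: p.2)) au) orbT.
by rewrite perm_sym -(perm_catCA [:: b] [:: a]) perm_cons perm_sym.
Qed.

Lemma foldr_or_mem (Q : T * seq T -> Prop) (l : seq (T * seq T)) p :
  p \in l -> Q p -> foldr (fun p P => Q p \/ P) False l.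
Proof. by elim: l => [|q l IHl] //=; rewrite inE => /orP [/eqP <-|/IHl pl /pl]; [left | right]. Qed.

Lemma perm_eq_match s t : perm_eq s t -> perm_match s t.
Proof.
elim: s t => [|a s IHs] t //= eq_st.
have [u au t_au] : exists2 u, (a, u) \in picks t & perm_eq t (a :: u).
  by apply: mem_picks; rewrite -(perm_mem eq_st) mem_head.
apply: (foldr_or_mem (p := (a, u))) => //; split=> //; apply: IHs.
by rewrite -(perm_cons a) (perm_trans eq_st t_au).
Qed.

End PermMatch.

Section Strings.
Variables (T : finType) (e : rel T).
Implicit Types (f : T -> R) (S : {set T}) (l : seq T).

Lemma nvals_ge f (s : seq T) : uniq (map f s) -> size s <= nvals f.
Proof.
move=> uniq_fs; rewrite -(size_map f); apply: uniq_leq_size => // _ /mapP [w _ ->].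
by rewrite mem_undup map_f ?mem_enum.
Qed.

Lemma nvals_le1_const f : nvals f <= 1 -> forall v w, f v = f w.
Proof.
move=> le1 v w; apply/eqP; apply: contraLR le1 => fvw.
by rewrite -ltnNge (nvals_ge (s := [:: v; w])) //= inE fvw.
Qed.

Lemma nvals_le2_two_valued f : nvals f <= 2 ->
  exists S (a b : R), forall w, f w = if w \in S then b else a.
Proof.
move=> le2; have [v0 _|T0] := pickP (@predT T); last by exists set0, 0%R, 0%R => w; have := T0 w.
exists [set w | f w != f v0], (f v0).
have [w1 /= fw1|same] := pickP [pred w | f w != f v0]; last first.
  by exists 0%R => w; rewrite inE; have /negbFE/eqP := same w => ->; rewrite eqxx.
exists (f w1) => w; rewrite inE; have [//|fw] := eqVneq (f w) (f v0).
apply/eqP; apply: contraLR le2 => fw1w; rewrite -ltnNge.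
by rewrite (nvals_ge (s := [:: v0; w; w1])) //= !inE negb_or !(eq_sym (f v0)) fw fw1 fw1w.
Qed.

Definition sphere_profile S (u : T) : seq nat :=
  [seq #|[set w in S | dist e u w == i]| | i <- iota 1 (diameter e)].

Definition twins S (u v : T) : Prop :=
  [/\ u != v, sphere_profile S u = sphere_profile S v
            & sphere_profile (~: S) u = sphere_profile (~: S) v].

Section TwoValued.
Local Open Scope ring_scope.

Lemma sum_two_valued f S (a b : R) u i : (forall w, f w = if w \in S then b else a) ->
  \sum_(w | dist e u w == i) f w =
    b *+ #|[set w in S | dist e u w == i]| + a *+ #|[set w in ~: S | dist e u w == i]|.
Proof.
move=> fE; rewrite (bigID (mem S)) /= -!sumr_const; congr (_ + _).
  by apply: eq_big => [w|w /andP [_ Sw]]; rewrite ?fE ?Sw // !inE andbC.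
by apply: eq_big => [w|w /andP [_ /negPf nSw]]; rewrite ?fE ?nSw // !inE andbC.
Qed.

Lemma vstring_two_valued f S (a b : R) u v :
  (forall w, f w = if w \in S then b else a) ->
  sphere_profile S u = sphere_profile S v ->
  sphere_profile (~: S) u = sphere_profile (~: S) v ->
  vstring e f u = vstring e f v.
Proof.
move=> fE /eq_in_map eqS /eq_in_map eqSC; apply/eq_in_map => i iP.
by rewrite !(sum_two_valued _ _ fE) eqS ?eqSC.
Qed.

End TwoValued.

Lemma ID_nvals_gt1 f u v : twins set0 u v -> ID_assignment e f -> 1 < nvals f.
Proof.
case=> uv eq0 eqT fID; rewrite ltnNge; apply/negP => /nvals_le1_const fconst.
case/eqP: uv; apply: fID; apply: (vstring_two_valued (a := f u) (b := f u) _ eq0 eqT).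
by move=> w; rewrite (fconst w u); case: ifP.
Qed.

Lemma ID_nvals_gt2 f : (forall S, exists u v, twins S u v) -> ID_assignment e f -> 2 < nvals f.
Proof.
move=> allS fID; rewrite ltnNge; apply/negP => /nvals_le2_two_valued [S [a [b fE]]].
have [u [v [uv eqS eqSC]]] := allS S.
by case/eqP: uv; apply: fID; apply: vstring_two_valued fE eqS eqSC.
Qed.

Section Counting.
Local Open Scope ring_scope.

Definition count_profile l (u : T) : seq nat :=
  [seq count (fun w => dist e u w == i) l | i <- iota 1 (diameter e)].

Definition count_assignment l (w : T) : R := (count_mem w l)%:R.

Lemma vstring_count_assignment l u :
  vstring e (count_assignment l) u = [seq k%:R | k <- count_profile l u].
Proof.
by rewrite /vstring -map_comp; apply: eq_map => i /=; rewrite -natr_sum sum_count_mem.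
Qed.

Lemma ID_count_assignment l :
  injective (count_profile l) -> ID_assignment e (count_assignment l).
Proof.
move=> inj_l u v; rewrite !vstring_count_assignment.
by move/(inj_map (mulrIn (oner_neq0 R))); apply: inj_l.
Qed.

Lemma nvals_count_assignment l :
  nvals (count_assignment l) = size (undup [seq count_mem w l | w <- enum T]).
Proof.
rewrite /nvals (map_comp (GRing.natmul 1)) undup_map_inj ?size_map //.
exact: mulrIn (oner_neq0 R).
Qed.

End Counting.

End Strings.

Definition cdist (n a b : nat) : nat := minn (a - b + (b - a)) (n - (a - b + (b - a))).

Definition pdist (n : nat) (p q : nat * bool) : nat := cdist n p.1 q.1 + (p.2 != q.2).

(* Vertices are encoded by pairs (position, layer) in [nat * bool]: enumerations of finite
   types are locked and do not reduce under [vm_compute], so the finite checks run on codes. *)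
Definition vcode (n : nat) (v : 'I_n * bool) : nat * bool := (val v.1, v.2).

Lemma vcode_inj n : injective (@vcode n).
Proof. by move=> [a s] [b t] [/val_inj -> ->]. Qed.

Lemma cdist_le n a b : cdist n a b <= n./2.
Proof. by have := odd_double_half n; rewrite /cdist -addnn; lia. Qed.

Lemma pdist_le n p q : pdist n p q <= n./2 + 1.
Proof. by have := cdist_le n p.1 q.1; rewrite /pdist; case: (_ != _); lia. Qed.

Lemma modS_ord n (b : 'I_n) : b.+1 %% n = if b.+1 == n then 0 else b.+1.
Proof.
case: eqP => [->|ne]; first by rewrite modnn.
by rewrite modn_small //; have := ltn_ord b; lia.
Qed.

Lemma val_ordS n (b : 'I_n) : val (ordS b) = if b.+1 == n then 0 else b.+1.
Proof. exact: modS_ord. Qed.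

Lemma val_ord_pred n (b : 'I_n) : val (ord_pred b) = if b == 0 :> nat then n.-1 else b.-1.
Proof.
have bn := ltn_ord b; rewrite /=; case: eqP => [->|ne]; first by rewrite add0n modn_small; lia.
by rewrite -subn1 -addnBAC ?lt0n ?modnDr ?modn_small //; lia.
Qed.

Lemma cdist_closer n (a b : 'I_n) : 0 < cdist n a b ->
  cdist n a (ordS b) < cdist n a b \/ cdist n a (ord_pred b) < cdist n a b.
Proof.
rewrite val_ordS val_ord_pred /cdist => pos.
have an := ltn_ord a; have bn := ltn_ord b.
case: (ltngtP a b) => [ab|ba|ab]; last by lia.
- have [short|long] := leqP (2 * (b - a)) n.
  + by right; rewrite (_ : (b == 0 :> nat) = false); lia.
  + by left; case: eqP => E; lia.
- have [short|long] := leqP (2 * (a - b)) n.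
  + by left; rewrite (_ : (b.+1 == n) = false); lia.
  + by right; case: eqP => E; lia.
Qed.

Section PrismDistance.
Variable n : nat.
Implicit Types x y z : 'I_n * bool.

Lemma pdist_eq0 x y : (pdist n (vcode x) (vcode y) == 0) = (y == x).
Proof.
case: x y => [a s] [b t]; rewrite /pdist /cdist /= xpair_eqE -val_eqE /=.
by have := ltn_ord a; have := ltn_ord b; case: s; case: t => /=; lia.
Qed.

Lemma pdist_adj x z y : prism_rel n z y ->
  pdist n (vcode x) (vcode y) <= pdist n (vcode x) (vcode z) + 1.
Proof.
case: x z y => [a s] [c p] [b t].
rewrite /prism_rel /pdist /cdist /= !modS_ord -(val_eqE c b) /=.
have := ltn_ord a; have := ltn_ord b; have := ltn_ord c.
by do 2 case: ifP => ?; case: s; case: t; case: p => /=; lia.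
Qed.

Lemma pdist_closer x y : 0 < pdist n (vcode x) (vcode y) ->
  exists2 z, prism_rel n z y & pdist n (vcode x) (vcode z) < pdist n (vcode x) (vcode y).
Proof.
case: x y => [a s] [b t]; rewrite /pdist /=.
have [<-|st] := eqVneq s t; last first.
  by exists (b, s); rewrite /prism_rel /= eqxx ?st ?orbT ?addn0 ?addn1.
rewrite addn0 => /cdist_closer [closer|closer].
- exists (ordS b, s); last by rewrite /= eqxx addn0.
  by rewrite /prism_rel /= !eqxx orbT.
- exists (ord_pred b, s); last by rewrite /= eqxx addn0.
  by rewrite /prism_rel /= -[_ %% n]/(val (ordS (ord_pred b))) ord_predK !eqxx.
Qed.

Lemma ball_prism k x : ball (prism_rel n) k x = [set y | pdist n (vcode x) (vcode y) <= k].
Proof.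
elim: k => [|k IHk] /=; apply/setP => y; rewrite !inE.
  by rewrite leqn0 pdist_eq0.
rewrite IHk inE; apply/idP/idP.
- case/orP => [|/existsP [z /andP [zx zy]]]; first exact: leqW.
  by rewrite inE in zx; apply: leq_trans (pdist_adj x zy) _; rewrite addn1.
- rewrite leq_eqVlt => /orP [/eqP Dy|]; last by rewrite ltnS => ->.
  have [|z zy closer] := pdist_closer (x := x) (y := y); first by rewrite Dy.
  by apply/orP; right; apply/existsP; exists z; rewrite inE zy andbT -ltnS -Dy.
Qed.

Hypothesis n_gt0 : 0 < n.

Lemma dist_prism x y : dist (prism_rel n) x y = pdist n (vcode x) (vcode y).
Proof.
rewrite /dist (eq_find (a2 := fun k => pdist n (vcode x) (vcode y) <= k)); last first.
  by move=> k; rewrite ball_prism inE.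
rewrite find_leq_iota ?subn0 // card_prod card_ord card_bool.
by have := pdist_le n (vcode x) (vcode y); have := odd_double_half n; rewrite -addnn; lia.
Qed.

Lemma diameter_prism : diameter (prism_rel n) = n./2 + 1.
Proof.
apply/eqP; rewrite eqn_leq; apply/andP; split.
  apply/bigmax_leqP => x _; apply/bigmax_leqP => y _; rewrite dist_prism; exact: pdist_le.
have half_lt : n./2 < n by have := odd_double_half n; rewrite -addnn; lia.
apply: (leq_trans _ (leq_bigmax (Ordinal n_gt0, false))).
apply: (leq_trans _ (leq_bigmax (Ordinal half_lt, true))).
rewrite dist_prism /pdist /cdist /=.
by have := odd_double_half n; rewrite -addnn; lia.
Qed.

End PrismDistance.

Lemma prism_layer_twins n (a : 'I_n) : twins (prism_rel n) set0 (a, false) (a, true).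
Proof.
have n0 : 0 < n by apply: leq_ltn_trans (ltn_ord a).
have flip_inj : injective (fun w : 'I_n * bool => (w.1, ~~ w.2)).
  by move=> [b s] [c t] [-> /negb_inj ->].
split; first by rewrite xpair_eqE andbF.
  by apply: eq_map => i; apply: eq_card => w; rewrite !inE.
apply: eq_map => i; rewrite -[RHS](card_preimset _ flip_inj); apply: eq_card => w.
by rewrite !inE !dist_prism // /pdist /=; case: (w.2).
Qed.

Definition codes n : seq (nat * bool) := [seq (a, s) | a <- iota 0 n, s <- [:: false; true]].

Lemma mem_codes n p : (p \in codes n) = (p.1 < n).
Proof.
case: p => a s; apply/allpairsP/idP => [[[b t] /= [bn _ [-> _]]]|an].
  by rewrite mem_iota in bn.
by exists (a, s); rewrite /= mem_iota an; case: (s).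
Qed.

Lemma codes_vcode n p : p \in codes n -> exists u : 'I_n * bool, vcode u = p.
Proof. by case: p => a s; rewrite mem_codes => an; exists (Ordinal an, s). Qed.

Lemma perm_codes n : perm_eq [seq vcode w | w <- enum {: 'I_n * bool}] (codes n).
Proof.
apply: uniq_perm.
- by rewrite (map_inj_uniq (@vcode_inj n)) enum_uniq.
- apply: allpairs_uniq => //; first exact: iota_uniq.
  by move=> [? ?] [? ?] _ _ [/= -> ->].
move=> p; apply/mapP/idP => [[w _ ->]|/codes_vcode [w <-]]; last by exists w; rewrite ?mem_enum.
by rewrite mem_codes ltn_ord.
Qed.

Lemma card_vcode n (P : pred (nat * bool)) :
  #|[set w : 'I_n * bool | P (vcode w)]| = count P (codes n).
Proof.
rewrite -(permP (perm_codes n)) count_map -size_filter cardsE cardE /enum_mem -filter_predI.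
by congr size; apply: eq_filter => w; rewrite !inE andbT.
Qed.

Definition code_profile n (l : seq (nat * bool)) (p : nat * bool) : seq nat :=
  [seq count (fun q => pdist n p q == i) l | i <- iota 1 (n./2 + 1)].

Lemma sphere_profile_codes n (A : {set 'I_n * bool}) (P : pred (nat * bool)) u : 0 < n ->
  (forall w, P (vcode w) = (w \in A)) ->
  sphere_profile (prism_rel n) A u = code_profile n (filter P (codes n)) (vcode u).
Proof.
move=> n0 PA; rewrite /sphere_profile diameter_prism //; apply: eq_map => i.
by rewrite count_filter -card_vcode; apply: eq_card => w; rewrite !inE dist_prism // PA andbC.
Qed.

Fixpoint bitseqs k : seq bitseq :=
  if k is k'.+1 then [seq b :: m | b <- [:: false; true], m <- bitseqs k'] else [:: [::]].

Lemma mem_bitseqs m : m \in bitseqs (size m).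
Proof.
elim: m => [|b m IHm] //; apply/allpairsP; exists (b, m) => /=.
by rewrite IHm; case: b.
Qed.

Definition code_twins n (A B : seq (nat * bool)) : bool :=
  has (fun p => has (fun q => [&& p != q, code_profile n A p == code_profile n A q
                                  & code_profile n B p == code_profile n B q]) (codes n)) (codes n).

Definition bicolorings_have_twins n : bool :=
  all (fun m => code_twins n (mask m (codes n)) (mask (map negb m) (codes n))) (bitseqs (2 * n)).

Lemma twins_of_bicolorings n : 0 < n -> bicolorings_have_twins n ->
  forall S, exists u v, twins (prism_rel n) S u v.
Proof.
move=> n0 /allP chk S; pose P p := p \in [seq vcode w | w <- enum S].
have PS w : P (vcode w) = (w \in S) by rewrite /P mem_map ?mem_enum //; exact: vcode_inj.
have sizeP : size (map P (codes n)) = 2 * n.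
  by rewrite size_map size_allpairs size_iota mulnC.
have := chk (map P (codes n)); rewrite -sizeP mem_bitseqs => /(_ isT).
rewrite -map_comp -!filter_mask => /hasP [p /codes_vcode [u <-]] /hasP [q /codes_vcode [v <-]].
case/and3P => uv /eqP eqS /eqP eqSC; exists u, v; split.
- by rewrite (inj_eq (@vcode_inj n)) in uv.
- by rewrite !(sphere_profile_codes _ n0 PS).
- have PSC w : (negb \o P) (vcode w) = (w \in ~: S) by rewrite /= PS inE.
  by rewrite !(sphere_profile_codes _ n0 PSC).
Qed.

Lemma lift_codes n (l : seq (nat * bool)) : all (fun p => p.1 < n) l ->
  exists l' : seq ('I_n * bool), map (@vcode n) l' = l.
Proof.
elim: l => [|p l IHl] /=; first by exists [::].
case/andP=> pn /IHl [l' <-].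
have [u <-] : exists u : 'I_n * bool, vcode u = p by apply: codes_vcode; rewrite mem_codes.
by exists (u :: l').
Qed.

Lemma prism_ID_of_codes n (l : seq (nat * bool)) : 0 < n -> all (fun p => p.1 < n) l ->
  {in codes n &, injective (code_profile n l)} ->
  exists f, ID_assignment (prism_rel n) f /\
            nvals f = size (undup [seq count_mem p l | p <- codes n]).
Proof.
move=> n0 /lift_codes [l' <-] inj_l.
have count_vcode w : count_mem (vcode w) (map (@vcode n) l') = count_mem w l'.
  by rewrite count_map; apply: eq_count => w' /=; rewrite (inj_eq (@vcode_inj n)).
exists (count_assignment l'); split.
- apply: ID_count_assignment => u v.
  have profile_vcode x :
      count_profile (prism_rel n) l' x = code_profile n (map (@vcode n) l') (vcode x).
    rewrite /count_profile diameter_prism //; apply: eq_map => i.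
    by rewrite count_map; apply: eq_count => w /=; rewrite dist_prism.
  rewrite !profile_vcode => /inj_l eq_uv; apply: vcode_inj.
  by apply: eq_uv; rewrite mem_codes ltn_ord.
- rewrite nvals_count_assignment; apply/perm_size/perm_undup/perm_mem.
  have -> : [seq count_mem w l' | w <- enum {: 'I_n * bool}] =
            [seq count_mem p (map (@vcode n) l') | p <- [seq vcode w | w <- enum {: 'I_n * bool}]].
    by rewrite -[in RHS]map_comp; apply: eq_map => w /=; rewrite count_vcode.
  exact/perm_map/perm_codes.
Qed.

Lemma cdist_small n x a : 2 * (x - a + (a - x)) <= n -> cdist n x a = x - a + (a - x).
Proof. by rewrite /cdist; lia. Qed.

Lemma cdist_large n x a : n < 2 * (x - a + (a - x)) -> cdist n x a = n - (x - a + (a - x)).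
Proof. by rewrite /cdist; lia. Qed.

Ltac solve_cdist :=
  repeat (split; first lia);
  repeat match goal with |- context [cdist ?n ?x ?a] =>
    first [rewrite (@cdist_small n x a); last lia | rewrite (@cdist_large n x a); last lia] end;
  lia.

Lemma cdist_marks n h r x : n = h + h + r -> r <= 1 -> 4 <= h -> x < n ->
  (x = 0 /\ cdist n x 0 = 0 /\ cdist n x 1 = 1 /\
     cdist n x (h - 2) + 2 = h /\ cdist n x h = h) \/
  (1 <= x <= h - 2 /\ cdist n x 0 = x /\ cdist n x 1 + 1 = x /\
     cdist n x (h - 2) + x + 2 = h /\ cdist n x h + x = h) \/
  (h - 1 <= x <= h /\ cdist n x 0 = x /\ cdist n x 1 + 1 = x /\
     cdist n x (h - 2) + h = x + 2 /\ cdist n x h + x = h) \/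
  (x = h + 1 /\ cdist n x 0 + 1 = h + r /\ cdist n x 1 = h /\
     cdist n x (h - 2) = 3 /\ cdist n x h = 1) \/
  (h + 2 <= x <= 2 * h - 2 /\ cdist n x 0 + x = n /\ cdist n x 1 + x = n + 1 /\
     cdist n x (h - 2) + h = x + 2 /\ cdist n x h + h = x) \/
  (2 * h - 1 <= x /\ cdist n x 0 + x = n /\ cdist n x 1 + x = n + 1 /\
     cdist n x (h - 2) + x + 2 = n + h /\ cdist n x h + h = x).
Proof.
move=> En r1 h4 xn.
have [x0|x1] := posnP x; first by left; solve_cdist.
have [xh2|xh2] := leqP x (h - 2); first by right; left; solve_cdist.
have [xh|xh] := leqP x h; first by do 2 right; left; solve_cdist.
have [xh1|xh1] := leqP x (h + 1); first by do 3 right; left; solve_cdist.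
by have [xh3|xh3] := leqP x (2 * h - 2); [do 4 right; left | do 5 right]; solve_cdist.
Qed.

Definition marks n : seq (nat * bool) :=
  [:: (0, false); (1, false); (n./2 - 2, false); (n./2, false)].

Lemma perm_eq_of_profile n l p q : code_profile n l p = code_profile n l q ->
  perm_eq (map (pdist n p) l) (map (pdist n q) l).
Proof.
move=> /eq_in_map eq_prof; apply: perm_eq_of_pos_counts; first by rewrite !size_map.
move=> i i_gt0; rewrite !count_map.
have [i_le|i_gt] := leqP i (n./2 + 1); first by apply: eq_prof; rewrite mem_iota; lia.
rewrite !(@eq_count _ _ pred0) ?count_pred0 // => w /=.
  by have := pdist_le n q w; lia.
by have := pdist_le n p w; lia.
Qed.

Lemma marks_inj n : 9 <= n -> {in codes n &, injective (code_profile n (marks n))}.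
Proof.
move=> n9 [x s] [y t]; rewrite !mem_codes /= => xn yn /perm_eq_of_profile /perm_eq_match /=.
have En : n = n./2 + n./2 + odd n by have := odd_double_half n; rewrite -addnn; lia.
have r1 : odd n <= 1 by case: odd.
have h4 : 4 <= n./2 by lia.
have Rx := cdist_marks En r1 h4 xn; have Ry := cdist_marks En r1 h4 yn.
rewrite /pdist /=; move: En r1 h4 Rx Ry; move: (n./2) (odd n) => h r.
move: (cdist n x 0) (cdist n x 1) (cdist n x (h - 2)) (cdist n x h) => a0 a1 a2 a3.
move: (cdist n y 0) (cdist n y 1) (cdist n y (h - 2)) (cdist n y h) => b0 b1 b2 b3.
move=> En r1 h4 Rx Ry P; suff [-> ->] : x = y /\ s = t by [].
(* 4 choices of layers times 36 pairs of arcs, each closed by lia against the 24 matchings *)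
subst n; case: s P; case: t => /= P;
  destruct Rx as [Rx|[Rx|[Rx|[Rx|[Rx|Rx]]]]]; destruct Ry as [Ry|[Ry|[Ry|[Ry|[Ry|Ry]]]]]; lia.
Qed.

Lemma marks_in_range n : 9 <= n -> all (fun p => p.1 < n) (marks n).
Proof. by move=> n9; have := odd_double_half n; rewrite /= -addnn; lia. Qed.

Lemma marks_count_values n : 9 <= n ->
  size (undup [seq count_mem p (marks n) | p <- codes n]) = 2.
Proof.
move=> n9; have uniq_marks : uniq (marks n).
  by have := odd_double_half n; rewrite /= !inE !xpair_eqE /= !andbT -addnn; lia.
have n0 : 0 < n by lia.
apply: (@perm_size _ _ [:: 1; 0]); apply: uniq_perm => //; first exact: undup_uniq.
move=> k; rewrite mem_undup; apply/mapP/idP => [[p _ ->]|].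
  by rewrite count_uniq_mem //; case: (p \in marks n).
rewrite !inE => /orP [] /eqP ->.
  by exists (0, false); rewrite ?mem_codes ?count_uniq_mem ?mem_head.
by exists (0, true); rewrite ?mem_codes ?count_uniq_mem // !inE !xpair_eqE !andbF.
Qed.

Definition separating n (l : seq (nat * bool)) : bool :=
  all (fun p => p.1 < n) l &&
  all2rel (fun p q => (code_profile n l p == code_profile n l q) ==> (p == q)) (codes n).

Lemma ID_of_separating n l : 0 < n -> separating n l ->
  exists f, ID_assignment (prism_rel n) f /\
            nvals f = size (undup [seq count_mem p l | p <- codes n]).
Proof.
move=> n0 /andP [l_codes /allrelP inj_l]; apply: prism_ID_of_codes => // p q pc qc eq_pq.
by apply/eqP; apply: (implyP (inj_l p q pc qc)); rewrite eq_pq.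
Qed.

Definition small_witness n : seq (nat * bool) :=
  match n with
  | 3 => [:: (0, false); (0, false); (1, false)]
  | 4 => [:: (0, false); (0, false); (0, true); (0, true); (1, false)]
  | 5 => [:: (0, false); (0, false); (2, false)]
  | 6 | 7 => [:: (0, false); (0, true); (1, false); (2, false); (3, true)]
  | 8 => [:: (0, false); (1, false); (2, true); (6, true)]
  | _ => [::]
  end.

Lemma small_witnesses_separate :
  all (fun n => separating n (small_witness n) &&
     (size (undup [seq count_mem p (small_witness n) | p <- codes n]) == if n <= 5 then 3 else 2))
    (iota 3 6).
Proof. by vm_compute. Qed.

Lemma small_prisms_have_twins : all bicolorings_have_twins [:: 3; 4; 5].
Proof. by vm_compute. Qed.

Lemma prism_ID_small n : 3 <= n <= 8 ->
  exists f, ID_assignment (prism_rel n) f /\ nvals f = if n <= 5 then 3 else 2.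
Proof.
move=> n_range; have /allP/(_ n) := small_witnesses_separate.
rewrite mem_iota => /(_ ltac:(lia)) /andP [sep /eqP <-].
by apply: ID_of_separating sep; lia.
Qed.

Lemma prism_ID_marks n : 9 <= n -> exists f, ID_assignment (prism_rel n) f /\ nvals f = 2.
Proof.
move=> n9; rewrite -(marks_count_values n9).
by apply: prism_ID_of_codes; [lia | exact: marks_in_range | exact: marks_inj].
Qed.

Lemma prism_nvals_gt1 n f : 0 < n -> ID_assignment (prism_rel n) f -> 1 < nvals f.
Proof. by move=> n0; apply: ID_nvals_gt1 (prism_layer_twins (Ordinal n0)). Qed.

Lemma small_prism_nvals_gt2 n f : 3 <= n <= 5 -> ID_assignment (prism_rel n) f -> 2 < nvals f.
Proof.
move=> n_range; apply: ID_nvals_gt2; apply: twins_of_bicolorings; first lia.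
by have /allP := small_prisms_have_twins; apply; rewrite !inE; lia.
Qed.

Theorem mainTheorem6 (n : nat) : 3 <= n ->
  (6 <= n -> IDI_is (prism_rel n) 2) /\
  (n <= 5 -> IDI_is (prism_rel n) 3).
Proof.
move=> n3; split=> [n6|n5]; split.
- have [n8|n9] := leqP n 8; last exact: prism_ID_marks.
  have [|f [fID fvals]] := @prism_ID_small n; first lia.
  by exists f; rewrite fvals ifN //; lia.
- by move=> f; apply: prism_nvals_gt1; lia.
- have [|f [fID fvals]] := @prism_ID_small n; first lia.
  by exists f; rewrite fvals ifT.
- by move=> f; apply: small_prism_nvals_gt2; lia.
Qed.
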